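(* Let $\Omega\subset\mathbb R^n$ be a $C^{1,\operatorname{Dini}}$ domain with $0\in\partial\Omega$, described near $0$ in coordinates $(x',x_n)$ by $B_{R_0}\cap\Omega=\{x_n<\varphi(x')\}$, $B_{R_0}\cap\partial\Omega=\{x_n=\varphi(x')\}$, with $\varphi(0)=0$ and $D'\varphi(0)=0$, so that the outer unit normal satisfies $\nu(0)=e_n=(0,\dots,0,1)$. Assume $R_0<1$, $\sup_{|x'|\le R_0}\sqrt{1+|D'\varphi(x')|^2}\le \tfrac32$, and let $\Lambda:(0,R_0]\to(0,\infty)$ be a non-decreasing function such that $$\sup_{x_1,x_2\in\partial\Omega\cap B_r}|\nu(x_2)-\nu(x_1)|\le\Lambda(r)\quad\text{for every }r\in(0,R_0],$$ and $\Lambda(R_0)<\tfrac1{1000}$. For $0<r\le R_0$ let $a=4\Lambda(r)r$ and $y_0=-a\nu(0)=(0,-a)$. Then for $0<r\le R_0$ the set $\Omega\cap B_{r-a}(y_0)$ is star-shaped with respect to $y_0$, and moreover for every $x\in\partial\Omega\cap B_r$, $$\frac{r\Lambda(r)}{2}\le\langle x-y_0,\nu(x)\rangle\le 10\, r\Lambda(r).$$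
   Context: $B_r$ is the open Euclidean ball of radius $r$ centered at $0$, $B_r(y)$ the one centered at $y$. A $C^{1,\operatorname{Dini}}$ domain is a connected bounded open set whose boundary is locally the graph $x_n=\varphi(x')$ of a function with $|D'\varphi(x_1')-D'\varphi(x_2')|\le\psi(|x_1'-x_2'|)$, $\int_0^2\psi(r)/r\,dr<\infty$, with $\Omega$ lying locally below the graph. The outer unit normal at $(x',\varphi(x'))$ is $\nu=\big(-D'\varphi,1\big)/\sqrt{1+|D'\varphi|^2}$. *)

(* Points of R^N are row vectors 'rV[R]_N, with N = n.+1
   so that x = (x', x_n) with x' : 'rV[R]_n and x_n the last coordinate. *)
From HB Require Import structures.
From mathcomp Require Import all_boot all_order all_algebra.
From mathcomp Require Import all_classical all_reals all_analysis.
Set Implicit Arguments. Unset Strict Implicit. Unset Printing Implicit Defensive.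
Import Order.TTheory GRing.Theory Num.Theory.
Import numFieldNormedType.Exports.
Local Open Scope classical_set_scope.
Local Open Scope ring_scope.

Section Defs.
Variable R : realType.

Definition dotv (N : nat) (x y : 'rV[R]_N) : R := \sum_(i < N) x 0 i * y 0 i.
Definition enorm (N : nat) (x : 'rV[R]_N) : R := Num.sqrt (dotv x x).

Definition eball (N : nat) (y : 'rV[R]_N) (r : R) : set 'rV[R]_N :=
  [set x | enorm (x - y) < r].

Definition bdry (N : nat) (A : set 'rV[R]_N) : set 'rV[R]_N :=
  closure A `\` interior A.

Definition xprime (n : nat) (x : 'rV[R]_n.+1) : 'rV[R]_n :=
  \row_(j < n) x 0 (widen_ord (leqnSn n) j).
Definition xlast (n : nat) (x : 'rV[R]_n.+1) : R := x 0 ord_max.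

Definition e_last (n : nat) : 'rV[R]_n.+1 := \row_(i < n.+1) (i == ord_max)%:R.

Definition grad (n : nat) (phi : 'rV[R]_n -> R) (x' : 'rV[R]_n) : 'rV[R]_n :=
  \row_(j < n) derive phi x' (delta_mx 0 j).

Definition normal_graph (n : nat) (phi : 'rV[R]_n -> R) (x : 'rV[R]_n.+1)
  : 'rV[R]_n.+1 :=
  let g := grad phi (xprime x) in
  (Num.sqrt (1 + enorm g ^+ 2))^-1 *:
    \row_(i < n.+1) match unlift ord_max i with
                    | Some j => - g 0 j
                    | None => 1
                    end.

Definition dini_modulus (psi : R -> R) : Prop :=
  (forall t, 0 <= psi t) /\
  measurable_fun (`]0%R, 2%R] : set R) psi /\
  (\int[lebesgue_measure]_(t in `]0%R, 2%R]) ((psi t / t)%:E) < +oo)%E.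

Definition C1Dini_on (n : nat) (phi : 'rV[R]_n -> R) (rho : R) : Prop :=
  (forall x', enorm x' <= rho -> differentiable phi x') /\
  exists psi : R -> R, dini_modulus psi /\
    forall x1 x2, enorm x1 <= rho -> enorm x2 <= rho ->
      enorm (grad phi x1 - grad phi x2) <= psi (enorm (x1 - x2)).

Definition orthogonal (N : nat) (Q : 'M[R]_N) : Prop := Q *m Q^T = 1%:M.

Definition C1Dini_domain (n : nat) (Om : set 'rV[R]_n.+1) : Prop :=
  open Om /\ connected Om /\ bounded_set Om /\
  forall p, bdry Om p ->
    exists (Q : 'M[R]_n.+1) (rho : R) (phi : 'rV[R]_n -> R),
      orthogonal Q /\ 0 < rho /\ C1Dini_on phi rho /\
      forall x, enorm (x - p) < rho ->
        let z := (x - p) *m Q in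
        (Om x <-> xlast z < phi (xprime z)) /\
        (bdry Om x <-> xlast z = phi (xprime z)).

Definition star_shaped (N : nat) (A : set 'rV[R]_N) (y : 'rV[R]_N) : Prop :=
  forall x, A x -> forall t : R, 0 <= t <= 1 -> A (y + t *: (x - y)).

End Defs.

From HB Require Import structures.
From mathcomp Require Import all_boot all_order all_algebra.
From mathcomp Require Import all_classical all_reals all_analysis.
From mathcomp Require Import ring lra.
Import Order.TTheory GRing.Theory Num.Theory.
Import numFieldNormedType.Exports.
Local Open Scope classical_set_scope.
Local Open Scope ring_scope.
Set Implicit Arguments. Unset Strict Implicit.

(* Near 0 the boundary points are the graph points x = (x', phi x'), with outer
   normal nu = (- grad phi, 1) / s where s = sqrt (1 + |grad phi|^2) lies in
   [1, 3/2].  Hence grad phi = - s nu', and on B_r the gradient oscillates by at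
   most 16/5 Lam(r): the graph is almost flat.
   For y0 = (0, -a) one has <x - y0, nu(x)> = (phi x' - <grad phi x', x'> + a) / s,
   and phi x' = <grad phi (t x'), x'> for some t in (0, 1) by the mean value
   theorem, so the numerator is a up to 16/5 Lam(r) r; as a = 4 Lam(r) r this
   gives both bounds.  This needs the graph point over t x' to lie in B_r, which
   holds because the graph moves away from 0 along rays (a continuity argument
   run inwards from x').
   For star-shapedness, the height of the graph above the segment from y0 to a
   point x of the set is positive at both ends.  At a last zero the segment would
   meet the graph from below, with slope at least that of the graph, whereas
   <z - y0, nu(z)> > 0 at that boundary point z says the opposite. *)

Section Euclid.
Variables (R : realType) (N : nat).
Implicit Types (x y z : 'rV[R]_N) (c : R).

Lemma dotvC x y : dotv x y = dotv y x.
Proof. by apply: eq_bigr => i _; rewrite mulrC. Qed.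

Lemma dotvDl x y z : dotv (x + y) z = dotv x z + dotv y z.
Proof. by rewrite /dotv -big_split; apply: eq_bigr => i _; rewrite !mxE mulrDl. Qed.

Lemma dotvZl c x z : dotv (c *: x) z = c * dotv x z.
Proof. by rewrite /dotv mulr_sumr; apply: eq_bigr => i _; rewrite !mxE mulrA. Qed.

Lemma dotvNl x z : dotv (- x) z = - dotv x z.
Proof. by rewrite -scaleN1r dotvZl mulN1r. Qed.

Lemma dotvBl x y z : dotv (x - y) z = dotv x z - dotv y z.
Proof. by rewrite dotvDl dotvNl. Qed.

Lemma dotvDr x y z : dotv z (x + y) = dotv z x + dotv z y.
Proof. by rewrite dotvC dotvDl !(dotvC z). Qed.

Lemma dotvZr c x z : dotv z (c *: x) = c * dotv z x.
Proof. by rewrite dotvC dotvZl dotvC. Qed.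

Lemma dotvBr x y z : dotv z (x - y) = dotv z x - dotv z y.
Proof. by rewrite dotvC dotvBl !(dotvC z). Qed.

Lemma dotv0l z : dotv 0 z = 0.
Proof. by rewrite /dotv big1 // => i _; rewrite mxE mul0r. Qed.

Lemma dotvv_ge0 x : 0 <= dotv x x.
Proof. by apply: sumr_ge0 => i _; rewrite -expr2 sqr_ge0. Qed.

Lemma dotvv_eq0 x : (dotv x x == 0) = (x == 0).
Proof.
apply/idP/eqP => [/eqP /psumr_eq0P x0 | ->]; last by rewrite dotv0l.
apply/rowP => i; rewrite mxE; apply/eqP; rewrite -sqrf_eq0 expr2.
by rewrite x0 // => j _; rewrite -expr2 sqr_ge0.
Qed.

Lemma dotv_sqr_le x y : dotv x y ^+ 2 <= dotv x x * dotv y y.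
Proof.
have [->|y0] := eqVneq y 0; first by rewrite dotvC !dotv0l expr0n mulr0.
have C0 : 0 < dotv y y by rewrite lt0r dotvv_eq0 y0 dotvv_ge0.
rewrite -subr_ge0 -(pmulr_rge0 _ C0).
have := dotvv_ge0 (dotv y y *: x - dotv x y *: y).
rewrite !(dotvBl, dotvBr, dotvZl, dotvZr) (dotvC y x).
by congr (0 <= _); ring.
Qed.

Lemma enorm_ge0 x : 0 <= enorm x.
Proof. exact: sqrtr_ge0. Qed.

Lemma enorm_sqr x : enorm x ^+ 2 = dotv x x.
Proof. by rewrite sqr_sqrtr // dotvv_ge0. Qed.

Lemma enorm0 : enorm (0 : 'rV[R]_N) = 0.
Proof. by rewrite /enorm dotv0l sqrtr0. Qed.

Lemma normr_dotv_le x y : `|dotv x y| <= enorm x * enorm y.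
Proof.
rewrite -(ler_pXn2r (n := 2)) ?nnegrE ?mulr_ge0 ?enorm_ge0 //.
by rewrite real_normK ?num_real // exprMn !enorm_sqr dotv_sqr_le.
Qed.

Lemma enormZ c x : enorm (c *: x) = `|c| * enorm x.
Proof. by rewrite /enorm dotvZl dotvZr mulrA -expr2 sqrtrM ?sqr_ge0 // sqrtr_sqr. Qed.

Lemma enormD x y : enorm (x + y) <= enorm x + enorm y.
Proof.
rewrite -(ler_pXn2r (n := 2)) ?nnegrE ?addr_ge0 ?enorm_ge0 //.
rewrite enorm_sqr !(dotvDl, dotvDr) sqrrD !enorm_sqr (dotvC y x).
have := normr_dotv_le x y; have := ler_norm (dotv x y); lra.
Qed.

Lemma enormZ_le c x : 0 <= c <= 1 -> enorm (c *: x) <= enorm x.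
Proof.
move=> /andP[c0 c1]; rewrite enormZ ger0_norm //.
by rewrite -[leRHS]mul1r ler_wpM2r ?enorm_ge0.
Qed.

Lemma eball0 x r : eball 0 r x = (enorm x < r).
Proof. by rewrite /eball /= subr0. Qed.

Lemma enorm_segment_lt x y rho t : enorm (x - y) < rho -> 0 <= t <= 1 ->
  enorm (y + t *: (x - y) - y) < rho.
Proof.
by move=> xy_lt t01; rewrite addrC addKr; exact: le_lt_trans (enormZ_le _ t01) xy_lt.
Qed.

Lemma enorm_lt_of_sub x y rho : enorm (x - y) < rho - enorm y -> enorm x < rho.
Proof.
by rewrite ltrBrDr => xy_lt; apply: le_lt_trans xy_lt; rewrite -{1}(subrK y x) enormD.
Qed.

End Euclid.

Section Coordinates.
Variables (R : realType) (n : nat).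
Implicit Types (x y : 'rV[R]_n.+1) (v : 'rV[R]_n) (c : R).

Definition xpair v c : 'rV[R]_n.+1 :=
  \row_(i < n.+1) match unlift ord_max i with Some j => v 0 j | None => c end.

Lemma unlift_widen (j : 'I_n) : unlift ord_max (widen_ord (leqnSn n) j) = Some j.
Proof.
have -> : widen_ord (leqnSn n) j = lift ord_max j.
  by apply: val_inj; rewrite /= /bump leqNgt ltn_ord.
exact: liftK.
Qed.

Lemma dotv_xsplit x y : dotv x y = dotv (xprime x) (xprime y) + xlast x * xlast y.
Proof.
by rewrite /dotv big_ord_recr /=; congr (_ + _); apply: eq_bigr => j _; rewrite !mxE.
Qed.

Lemma xprimeD x y : xprime (x + y) = xprime x + xprime y.
Proof. by apply/rowP => j; rewrite !mxE. Qed.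

Lemma xprimeZ c x : xprime (c *: x) = c *: xprime x.
Proof. by apply/rowP => j; rewrite !mxE. Qed.

Lemma xprimeB x y : xprime (x - y) = xprime x - xprime y.
Proof. by apply/rowP => j; rewrite !mxE. Qed.

Lemma xlastD x y : xlast (x + y) = xlast x + xlast y.
Proof. by rewrite /xlast !mxE. Qed.

Lemma xlastZ c x : xlast (c *: x) = c * xlast x.
Proof. by rewrite /xlast !mxE. Qed.

Lemma xlastB x y : xlast (x - y) = xlast x - xlast y.
Proof. by rewrite /xlast !mxE. Qed.

Lemma xprime0 : xprime (0 : 'rV[R]_n.+1) = 0.
Proof. by apply/rowP => j; rewrite !mxE. Qed.

Lemma xlast0 : xlast (0 : 'rV[R]_n.+1) = 0.
Proof. by rewrite /xlast !mxE. Qed.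

Lemma xprime_e_last : xprime (e_last R n) = 0.
Proof.
apply/rowP => j; rewrite !mxE; case: eqP => // /(congr1 val) /= jn.
by move: (ltn_ord j); rewrite jn ltnn.
Qed.

Lemma xlast_e_last : xlast (e_last R n) = 1.
Proof. by rewrite /xlast mxE eqxx. Qed.

Lemma enorm_e_last : enorm (e_last R n) = 1.
Proof.
by rewrite /enorm dotv_xsplit xprime_e_last xlast_e_last dotv0l add0r mulr1 sqrtr1.
Qed.

Lemma xprime_segment_e_last a s x :
  let y0 := - a *: e_last R n in xprime (y0 + s *: (x - y0)) = s *: xprime x.
Proof. by rewrite /= xprimeD !xprimeZ xprimeB xprimeZ xprime_e_last scaler0 subr0 add0r. Qed.

Lemma xlast_segment_e_last a s x :
  let y0 := - a *: e_last R n in xlast (y0 + s *: (x - y0)) = s * (xlast x + a) - a.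
Proof. by rewrite /= xlastD !xlastZ xlastB xlastZ xlast_e_last; ring. Qed.

Lemma xprime_xpair v c : xprime (xpair v c) = v.
Proof. by apply/rowP => j; rewrite !mxE unlift_widen. Qed.

Lemma xlast_xpair v c : xlast (xpair v c) = c.
Proof. by rewrite /xlast mxE unlift_none. Qed.

Lemma enorm_xprime_le x : enorm (xprime x) <= enorm x.
Proof.
by rewrite ler_sqrt ?dotvv_ge0 // [leRHS]dotv_xsplit lerDl -expr2 sqr_ge0.
Qed.

Lemma dotv_xpair v c : dotv (xpair v c) (xpair v c) = dotv v v + c ^+ 2.
Proof. by rewrite dotv_xsplit xprime_xpair xlast_xpair expr2. Qed.

End Coordinates.

Section RealFunctions.
Variable R : realType.

Lemma continuous_lt_near_left (f : R -> R) (s c : R) : {for s, continuous f} -> f s < c ->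
  exists2 d, 0 < d & forall u, s - d <= u <= s -> f u < c.
Proof.
move=> /cvgrPdist_lt fs fs_lt.
have e_gt0 : 0 < c - f s by rewrite subr_gt0.
have /nbhs_ballP [d /= d0 sd] := fs _ e_gt0.
exists (d / 2) => [|u /andP[su us]]; first by rewrite divr_gt0.
have /sd : ball s d u by rewrite -ball_normE /ball_ /= ger0_norm ?subr_ge0 //; lra.
by rewrite distrC => /(le_lt_trans (ler_norm _)); rewrite ltrD2r.
Qed.

Lemma real_induction_down01 (Q : R -> Prop) :
  (forall s, 0 <= s <= 1 -> (forall u, s < u <= 1 -> Q u) -> Q s) ->
  (forall s, 0 < s <= 1 -> (forall u, s <= u <= 1 -> Q u) ->
     exists2 d, 0 < d & forall u, 0 <= u -> s - d <= u <= s -> Q u) ->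
  forall u, 0 <= u <= 1 -> Q u.
Proof.
move=> Qclosed Qopen.
pose S := [set s : R | 0 <= s <= 1 /\ forall u, s <= u <= 1 -> Q u].
have S1 : S 1.
  split=> [|u u1]; first by rewrite ler01 lexx.
  have -> : u = 1 by lra.
  by apply: Qclosed => [|v]; [rewrite ler01 lexx | lra].
have lbS : has_lbound S by exists 0 => y [/andP[]].
pose m := inf S.
have m0 : 0 <= m by apply: lb_le_inf => [|y [/andP[]]]; first by exists 1.
have m1 : m <= 1 by exact: ge_inf.
have Qgt u : m < u <= 1 -> Q u.
  move=> /andP[mu u1].
  have um : 0 < u - m by rewrite subr_gt0.
  have [e [_ Qe] eu] := inf_adherent um (conj (ex_intro S 1 S1) lbS).
  by apply: Qe; rewrite u1 andbT ltW // -(subrK m u) addrC.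
have Sm : S m.
  split=> [|u /andP[mu u1]]; first by rewrite m0 m1.
  have [<-|mu'] := eqVneq m u; first by apply: Qclosed; rewrite ?m0.
  by apply: Qgt; rewrite u1 lt_neqAle mu' mu.
have [mz|mpos] := eqVneq m 0.
  by move=> u /andP[u0 u1]; apply: Sm.2; rewrite mz u0 u1.
have {}mpos : 0 < m by rewrite lt0r mpos.
have m_in : 0 < m <= 1 by rewrite mpos m1.
have [d d0 Qd] := Qopen m m_in Sm.2.
pose k := Num.min d m.
have k0 : 0 < k by rewrite lt_min d0 mpos.
have kd : k <= d by rewrite ge_min lexx.
have km : k <= m by rewrite ge_min lexx orbT.
have Sk : S (m - k).
  split=> [|u /andP[ku u1]]; first by apply/andP; split; lra.
  have [um|mu] := lerP u m; first by apply: Qd; [lra | apply/andP; split; lra].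
  by apply: Qgt; rewrite mu u1.
by have := ge_inf lbS Sk; rewrite -/m; lra.
Qed.

Lemma continuous_le_at_right (f : R -> R) s b c :
  {for s, continuous f} -> s < b -> (forall u, s < u <= b -> f u <= c) -> f s <= c.
Proof.
move=> fs sb fc; apply: (cvgr_to_le (cvg_at_right_filter fs)).
near=> u; apply: fc; apply/andP; split; first by near: u; exists 1 => //= y _; exact.
near: u; exists (b - s); first by rewrite /= subr_gt0.
move=> u /= su_lt _; apply/ltW; rewrite -(ltrD2r (- s)).
by apply: le_lt_trans (ler_norm _) _; rewrite distrC.
Unshelve. all: by end_near. Qed.

Lemma derive_ge0_at_right_min (f : R -> R) s eta :
  derivable f s 1 -> 0 < eta -> (forall t, s < t < s + eta -> f s <= f t) ->
  0 <= 'D_1 f s.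
Proof.
move=> df eta0 fmin.
rewrite /derive cvg_at_rightE //.
apply: limr_ge; first exact: cvgP (cvg_dnbhs_at_right df).
near=> h; have h0 : 0 < h by near: h; exists 1 => //= y _; exact.
apply: mulr_ge0; first by rewrite invr_ge0 ltW.
rewrite subr_ge0 [_%:A]mulr1 fmin //.
rewrite ltrDr h0 /= addrC ltrD2l; near: h.
by exists eta => // h /=; rewrite distrC subr0 => /(le_lt_trans (ler_norm _)).
Unshelve. all: by end_near. Qed.

End RealFunctions.

Section RayCalculus.
Variables (R : realType) (n : nat) (phi : 'rV[R]_n -> R).

Lemma derive_grad (y v : 'rV[R]_n) :
  differentiable phi y -> 'D_v phi y = dotv (grad phi y) v.
Proof.
move=> dy; rewrite deriveE // {1}(row_sum_delta v) linear_sum /dotv.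
by apply: eq_bigr => j _; rewrite linearZ /= -deriveE // /grad mxE mulrC.
Qed.

Lemma is_derive_ray (v : 'rV[R]_n) u : differentiable phi (u *: v) ->
  is_derive u 1 (fun t : R => phi (t *: v)) (dotv (grad phi (u *: v)) v).
Proof.
move=> du.
have E : (fun h : R => h^-1 *: (((fun t : R => phi (t *: v)) \o shift u) (h *: 1)
            - phi (u *: v))) =
         (fun h : R => h^-1 *: ((phi \o shift (u *: v)) (h *: v) - phi (u *: v))).
  by apply: funext => h /=; rewrite scalerDl [h *: 1]mulr1.
apply: DeriveDef; first by rewrite /derivable E; exact: diff_derivable.
by rewrite /derive E -derive_grad.
Qed.

Lemma continuous_ray (v : 'rV[R]_n) u : differentiable phi (u *: v) ->
  {for u, continuous (fun t : R => phi (t *: v))}.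
Proof.
move=> /is_derive_ray du; apply: differentiable_continuous.
by apply/derivable1_diffP; exact: ex_derive.
Qed.

Lemma is_derive_ray_subr_line (v : 'rV[R]_n) u (c a : R) : differentiable phi (u *: v) ->
  is_derive u 1 (fun t : R => phi (t *: v) - (t * c - a)) (dotv (grad phi (u *: v)) v - c).
Proof.
move=> /is_derive_ray phi_derive.
have line_derive : is_derive u 1 (fun t : R => t * c - a) (u *: 0 + c *: 1 - 0).
  exact: is_deriveB (is_deriveM (is_derive_id u 1) (is_derive_cst c u 1)) _.
apply: is_derive_eq (is_deriveB phi_derive line_derive) _.
by rewrite scaler0 add0r subr0 [c *: 1]mulr1.
Qed.

Lemma ray_MVT (v : 'rV[R]_n) (a b : R) :
  (forall u, a <= u <= b -> differentiable phi (u *: v)) -> a < b ->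
  exists2 t, a < t < b &
    phi (b *: v) - phi (a *: v) = dotv (grad phi (t *: v)) v * (b - a).
Proof.
move=> dphi ab.
have dray u : u \in `[a, b] ->
    is_derive u 1 (fun t => phi (t *: v)) (dotv (grad phi (u *: v)) v).
  by rewrite in_itv => /dphi /is_derive_ray.
have cray : {within `[a, b], continuous (fun t => phi (t *: v))}.
  by apply: derivable_within_continuous => t /dray [].
have [t abt ->] := MVT ab (fun t abt => dray t (subset_itv_oo_cc abt)) cray.
by exists t => //; rewrite in_itv in abt.
Qed.

End RayCalculus.

Section NormalGraph.
Variables (R : realType) (n : nat) (phi : 'rV[R]_n -> R).

Definition normal_scale (v : 'rV[R]_n) : R := Num.sqrt (1 + enorm (grad phi v) ^+ 2).

Lemma normal_scale_ge1 v : 1 <= normal_scale v.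
Proof. by rewrite -sqrtr1 ler_sqrt ?lerDl ?addr_ge0 ?sqr_ge0. Qed.

Lemma xprime_normal_graph (x : 'rV[R]_n.+1) :
  xprime (normal_graph phi x) = - (normal_scale (xprime x))^-1 *: grad phi (xprime x).
Proof. by apply/rowP => j; rewrite !mxE unlift_widen /grad !mxE mulrN mulNr. Qed.

Lemma xlast_normal_graph (x : 'rV[R]_n.+1) :
  xlast (normal_graph phi x) = (normal_scale (xprime x))^-1.
Proof. by rewrite /xlast !mxE unlift_none mulr1. Qed.

Lemma enorm_grad_le v : normal_scale v <= 3 / 2 -> enorm (grad phi v) <= 28 / 25.
Proof.
(* sqrt ((3/2)^2 - 1) <= 28/25 *)
move=> s_le; have : normal_scale v ^+ 2 <= (3 / 2) ^+ 2.
  by rewrite ler_pXn2r ?nnegrE //; apply: le_trans (normal_scale_ge1 v); lra.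
rewrite sqr_sqrtr ?addr_ge0 ?sqr_ge0 //.
by move: (enorm_ge0 (grad phi v)); move: (enorm _) => g g0; nra.
Qed.

(* grad phi = - s *: nu' and xlast nu = s^-1 *)
Lemma grad_sub_normal_graph (x1 x2 : 'rV[R]_n.+1) :
  let d := normal_graph phi x2 - normal_graph phi x1 in
  grad phi (xprime x1) - grad phi (xprime x2) =
  normal_scale (xprime x1) *: (xprime d + xlast d *: grad phi (xprime x2)).
Proof.
rewrite /= xprimeB xlastB !xprime_normal_graph !xlast_normal_graph.
have := normal_scale_ge1 (xprime x1); have := normal_scale_ge1 (xprime x2).
move: (normal_scale _) (normal_scale _) (grad _ _) (grad _ _) => s2 s1 g2 g1 s2_ge1 s1_ge1.
apply/rowP => j; rewrite !mxE; field.
by rewrite !gt_eqF // (lt_le_trans ltr01).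
Qed.

Lemma enorm_grad_sub_le (x1 x2 : 'rV[R]_n.+1) :
  normal_scale (xprime x1) <= 3 / 2 -> normal_scale (xprime x2) <= 3 / 2 ->
  enorm (grad phi (xprime x1) - grad phi (xprime x2))
    <= 16 / 5 * enorm (normal_graph phi x2 - normal_graph phi x1).
Proof.
(* 3/2 * (1 + 28/25) <= 16/5 *)
move=> s1_le /enorm_grad_le g2_le; rewrite grad_sub_normal_graph.
set d := _ - _; have s1_ge1 := normal_scale_ge1 (xprime x1).
have dlast_le : `|xlast d| <= enorm d.
  rewrite -(ler_pXn2r (n := 2)) ?nnegrE ?enorm_ge0 // real_normK ?num_real //.
  by rewrite enorm_sqr dotv_xsplit -expr2 lerDr dotvv_ge0.
rewrite enormZ ger0_norm; last exact: le_trans ler01 s1_ge1.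
apply: le_trans (ler_wpM2l _ (enormD _ _)) _; first exact: le_trans ler01 s1_ge1.
rewrite enormZ.
have LG_le := ler_pM (normr_ge0 _) (enorm_ge0 _) dlast_le g2_le.
have := ler_pM (le_trans ler01 s1_ge1) (addr_ge0 (enorm_ge0 _) (mulr_ge0 (normr_ge0 _)
  (enorm_ge0 _))) s1_le (lerD (enorm_xprime_le d) LG_le).
move: (enorm_ge0 d); move: (normal_scale _) (enorm d) (_ + _) => s D M *; lra.
Qed.

End NormalGraph.

(* l ^+ 2 + f ^+ 2 is the squared norm of a graph point (x', f) with |x'| = l; the
   left side is that of the graph point over (1 - v) x' when phi decreases by v P
   on the way *)
Lemma sqr_ray_le (R : realFieldType) (l f P v : R) :
  0 <= l -> 0 <= v <= 1 -> `|P| <= l / 100 -> `|f| <= 28 / 25 * l ->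
  (1 - v) ^+ 2 * l ^+ 2 + (f - v * P) ^+ 2 <= l ^+ 2 + f ^+ 2.
Proof.
move=> l0 /andP[v0 v1] P_le f_le.
have fP : - (f * P) <= 28 / 25 * l * (l / 100).
  apply: le_trans (ler_pM (normr_ge0 _) (normr_ge0 _) f_le P_le).
  by rewrite -normrM -normrN ler_norm.
have PP : P ^+ 2 <= (l / 100) ^+ 2.
  by rewrite -real_normK ?num_real // ler_pXn2r ?nnegrE ?normr_ge0 // divr_ge0.
have vL : v * l ^+ 2 <= l ^+ 2 by rewrite ler_piMl ?sqr_ge0.
have vP : v * P ^+ 2 <= P ^+ 2 by rewrite ler_piMl ?sqr_ge0.
rewrite -subr_le0.
have -> : (1 - v) ^+ 2 * l ^+ 2 + (f - v * P) ^+ 2 - (l ^+ 2 + f ^+ 2) =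
  v * (v * l ^+ 2 - 2 * l ^+ 2 - 2 * (f * P) + v * P ^+ 2) by ring.
apply: mulr_ge0_le0 => //.
move: PP fP vL vP (sqr_ge0 l); rewrite expr_div_n; lra.
Qed.

(* s^-1 * (N + 4 * M) is <x - y0, nu(x)> with M = Lam r * r *)
Lemma shifted_ratio_bounds (R : realFieldType) (s N M : R) :
  1 <= s <= 3 / 2 -> 0 <= M -> `|N| <= 16 / 5 * M ->
  M / 2 <= s^-1 * (N + 4 * M) /\ s^-1 * (N + 4 * M) <= 10 * M.
Proof.
move=> /andP[s1 s32] M0 N_le; have s0 : 0 < s by lra.
have sM : s * M <= 3 / 2 * M by rewrite ler_wpM2r.
have := ler_norm N; have := ler_norm (- N); rewrite normrN => N_ge N_le'.
by rewrite [s^-1 * _]mulrC ler_pdivlMr // ler_pdivrMr //; split; nra.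
Qed.

Section GraphBall.
Variables (R : realType) (n : nat) (phi : 'rV[R]_n -> R) (R0 : R) (Lam : R -> R).

Definition graph_ball (rho : R) (x : 'rV[R]_n.+1) : Prop :=
  enorm x < rho /\ xlast x = phi (xprime x).

Hypothesis R0_gt0 : 0 < R0.
Hypothesis phi_diff : forall v, enorm v <= R0 -> differentiable phi v.
Hypothesis phi0 : phi 0 = 0.
Hypothesis grad_phi0 : grad phi 0 = 0.
Hypothesis normal_scale_le : forall v, enorm v <= R0 -> normal_scale phi v <= 3 / 2.
Hypothesis Lam_gt0 : forall r, 0 < r <= R0 -> 0 < Lam r.
Hypothesis Lam_small : forall r, 0 < r <= R0 -> Lam r < 1 / 1000.
Hypothesis normal_osc : forall r, 0 < r <= R0 -> forall x1 x2,
  graph_ball r x1 -> graph_ball r x2 ->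
  enorm (normal_graph phi x2 - normal_graph phi x1) <= Lam r.

Lemma graph_ball_xprime rho x : graph_ball rho x -> enorm (xprime x) < rho.
Proof. by case=> x_lt _; apply: le_lt_trans x_lt; exact: enorm_xprime_le. Qed.

Lemma graph_ball_xpair rho v : 0 < rho -> dotv v v + phi v ^+ 2 < rho ^+ 2 ->
  graph_ball rho (xpair v (phi v)).
Proof.
move=> rho0 v_lt; rewrite /graph_ball xprime_xpair xlast_xpair.
by rewrite -(ltr_pXn2r (n := 2)) ?nnegrE ?enorm_ge0 ?ltW // enorm_sqr dotv_xpair.
Qed.

Lemma graph_ball0 rho : 0 < rho -> graph_ball rho 0.
Proof. by move=> rho0; rewrite /graph_ball enorm0 xprime0 xlast0 phi0. Qed.

Lemma differentiable_ray v : enorm v <= R0 ->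
  forall u, 0 <= u <= 1 -> differentiable phi (u *: v).
Proof. by move=> v_le u u01; apply: phi_diff; exact: le_trans (enormZ_le _ u01) v_le. Qed.

Lemma enorm_grad_sub_graph_le rho x1 x2 : 0 < rho <= R0 ->
  graph_ball rho x1 -> graph_ball rho x2 ->
  enorm (grad phi (xprime x1) - grad phi (xprime x2)) <= 16 / 5 * Lam rho.
Proof.
move=> /[dup] rho_le /andP[_ rhoR] x1_in x2_in.
have scale_le x : graph_ball rho x -> normal_scale phi (xprime x) <= 3 / 2.
  by move=> /graph_ball_xprime x_lt; apply/normal_scale_le/ltW/(lt_le_trans x_lt).
apply: le_trans (enorm_grad_sub_le (scale_le _ x1_in) (scale_le _ x2_in)) _.
by rewrite ler_wpM2l // normal_osc.
Qed.

Lemma normr_phi_le v : enorm v <= R0 -> `|phi v| <= 28 / 25 * enorm v.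
Proof.
move=> v_le; have [t /andP[t0 t1]] := ray_MVT (differentiable_ray v_le) ltr01.
rewrite scale1r scale0r phi0 subr0 subr0 mulr1 => ->.
apply: le_trans (normr_dotv_le _ _) _; rewrite ler_wpM2r ?enorm_ge0 //.
apply/enorm_grad_le/normal_scale_le; apply: le_trans v_le.
by apply: enormZ_le; rewrite !ltW.
Qed.

Lemma normr_dotv_grad_le x v : graph_ball R0 x ->
  `|dotv (grad phi (xprime x)) v| <= enorm v / 100.
Proof.
move=> x_in; have R0_in : 0 < R0 <= R0 by rewrite R0_gt0 lexx.
have := enorm_grad_sub_graph_le R0_in x_in (graph_ball0 R0_gt0).
rewrite xprime0 grad_phi0 subr0 => grad_le.
apply: le_trans (normr_dotv_le _ _) _; rewrite mulrC ler_wpM2l ?enorm_ge0 //.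
by apply: le_trans grad_le _; have := Lam_small R0_in; lra.
Qed.

(* the graph is flat to within 1/100 where it lies in B_R0, so there moving out
   along a ray increases the distance to 0 *)
Lemma sqr_graph_ray_le v u : enorm v <= R0 -> 0 <= u < 1 ->
  (forall w, u < w < 1 -> graph_ball R0 (xpair (w *: v) (phi (w *: v)))) ->
  u ^+ 2 * dotv v v + phi (u *: v) ^+ 2 <= dotv v v + phi v ^+ 2.
Proof.
move=> v_le /andP[u0 u1] ray_in.
have dray w : u <= w <= 1 -> differentiable phi (w *: v).
  by move=> /andP[uw w1]; apply: differentiable_ray; rewrite ?(le_trans u0 uw).
have [t /andP[ut t1]] := ray_MVT dray u1; rewrite scale1r => phi_inc.
have P_le := normr_dotv_grad_le v (ray_in t _); rewrite xprime_xpair ut t1 in P_le.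
have u_in : 0 <= 1 - u <= 1 by rewrite subr_ge0 (ltW u1) lerBlDr lerDl.
have phi_u : phi (u *: v) = phi v - (1 - u) * dotv (grad phi (t *: v)) v.
  by rewrite mulrC -phi_inc opprB addrC subrK.
have := sqr_ray_le (enorm_ge0 v) u_in (P_le isT) (normr_phi_le v_le).
by rewrite subKr -phi_u enorm_sqr.
Qed.

Lemma graph_ray_in_ball r x : 0 < r <= R0 -> graph_ball r x ->
  forall u, 0 <= u <= 1 -> graph_ball r (xpair (u *: xprime x) (phi (u *: xprime x))).
Proof.
move=> /andP[r0 rR] [x_lt x_graph].
set v := xprime x.
have v_le : enorm v <= R0.
  exact: ltW (lt_le_trans (graph_ball_xprime (conj x_lt x_graph)) rR).
(* the flatness used by sqr_graph_ray_le is only available while the ray stays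
   in B_R0, hence a continuity argument run inwards from u = 1 *)
pose G u := u ^+ 2 * dotv v v + phi (u *: v) ^+ 2.
have G_ball rho u :
    0 < rho -> G u < rho ^+ 2 -> graph_ball rho (xpair (u *: v) (phi (u *: v))).
  by move=> rho0 Gu_lt; apply: graph_ball_xpair; rewrite // dotvZl dotvZr mulrA -expr2.
have G1 : G 1 = enorm x ^+ 2.
  by rewrite /G expr1n mul1r scale1r enorm_sqr dotv_xsplit x_graph expr2.
have G1_lt : G 1 < R0 ^+ 2.
  by rewrite G1 ltr_pXn2r ?nnegrE ?enorm_ge0 ?ltW // (lt_le_trans x_lt).
have G_cont u : 0 <= u <= 1 -> {for u, continuous G}.
  move=> /(differentiable_ray v_le) /continuous_ray phi_cont.
  apply: continuousD; apply: continuousM => //; last exact: cvg_cst.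
  by apply: continuousM; exact: cvg_id.
have G_le : forall u, 0 <= u <= 1 -> G u <= G 1.
  apply: real_induction_down01 => [s /andP[s0 s1] G_right|s /andP[s0 s1] G_right].
    have [->//|s_neq1] := eqVneq s 1.
    apply: (continuous_le_at_right (G_cont s _)) G_right; first by rewrite s0.
    by rewrite lt_neqAle s_neq1.
  have Gs_le : G s <= G 1 by apply: G_right; rewrite lexx.
  have s01 : 0 <= s <= 1 by rewrite ltW.
  have [d d0 G_near] := continuous_lt_near_left (G_cont s s01) (le_lt_trans Gs_le G1_lt).
  exists d => // u u0 /andP[su us]; have [->|u_neq_s] := eqVneq u s; first exact: Gs_le.
  have {u_neq_s}us : u < s by rewrite lt_neqAle u_neq_s.
  rewrite [G 1]/G expr1n mul1r scale1r.
  apply: sqr_graph_ray_le => //; first by rewrite u0 (lt_le_trans us).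
  move=> w /andP[uw w1]; apply: G_ball => //; have [sw|ws] := leP s w.
    by apply: le_lt_trans G1_lt; apply: G_right; rewrite sw ltW.
  by apply: G_near; rewrite (le_trans su) ?ltW.
move=> u u01; apply: G_ball => //; apply: le_lt_trans (G_le u u01) _.
by rewrite G1 ltr_pXn2r ?nnegrE ?enorm_ge0 ?ltW.
Qed.

Lemma normal_dot_bounds r x : 0 < r <= R0 -> graph_ball r x ->
  let y0 := - (4 * Lam r * r) *: e_last R n in
  r * Lam r / 2 <= dotv (x - y0) (normal_graph phi x) /\
  dotv (x - y0) (normal_graph phi x) <= 10 * r * Lam r.
Proof.
move=> /[dup] r_in /andP[r0 rR] x_in y0.
set v := xprime x.
have v_lt : enorm v < r := graph_ball_xprime x_in.
have v_le : enorm v <= R0 := ltW (lt_le_trans v_lt rR).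
have [t /andP[t0 t1]] := ray_MVT (differentiable_ray v_le) ltr01.
rewrite scale1r scale0r phi0 !subr0 mulr1 => phi_v.
have t_in : graph_ball r (xpair (t *: v) (phi (t *: v))).
  by apply: graph_ray_in_ball => //; rewrite !ltW.
have grad_le := enorm_grad_sub_graph_le r_in t_in x_in; rewrite xprime_xpair in grad_le.
have N_le : `|dotv (grad phi (t *: v) - grad phi v) v| <= 16 / 5 * (Lam r * r).
  apply: le_trans (normr_dotv_le _ _) _; rewrite mulrA.
  by apply: ler_pM; rewrite ?enorm_ge0 ?(ltW v_lt).
have s_in : 1 <= normal_scale phi v <= 3 / 2 by rewrite normal_scale_ge1 normal_scale_le.
have -> : dotv (x - y0) (normal_graph phi x) = (normal_scale phi v)^-1 *
    (dotv (grad phi (t *: v) - grad phi v) v + 4 * (Lam r * r)).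
  rewrite dotv_xsplit /y0 xprimeB xlastB xprimeZ xlastZ xprime_e_last xlast_e_last.
  rewrite scaler0 subr0 xprime_normal_graph xlast_normal_graph x_in.2 -/v phi_v.
  rewrite dotvZr dotvBl (dotvC v).
  by move: (normal_scale _ _)^-1 (dotv _ v) (dotv _ v) => s P Q; ring.
rewrite [r * Lam r]mulrC -mulrA [r * Lam r]mulrC.
exact: shifted_ratio_bounds s_in (mulr_ge0 (ltW (Lam_gt0 r_in)) (ltW r0)) N_le.
Qed.

Lemma enorm_lt_of_shifted_ball r z : 0 < r <= R0 ->
  let a := 4 * Lam r * r in enorm (z - (- a *: e_last R n)) < r - a -> enorm z < r.
Proof.
move=> /[dup] r_in /andP[r0 _] a z_near.
have a0 : 0 < a by rewrite !mulr_gt0 ?Lam_gt0.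
apply: (enorm_lt_of_sub (y := - a *: e_last R n)).
by rewrite enormZ normrN enorm_e_last mulr1 gtr0_norm.
Qed.

(* <z - y0, nu(z)> > 0 says that the segment through y0 and z crosses the graph
   at z with a slope larger than that of the graph *)
Lemma grad_dot_lt_at_crossing r x s : 0 < r <= R0 -> 0 < s ->
  let a := 4 * Lam r * r in let y0 := - a *: e_last R n in
  graph_ball r (y0 + s *: (x - y0)) ->
  dotv (grad phi (s *: xprime x)) (xprime x) < xlast x + a.
Proof.
move=> /[dup] r_in /andP[r0 _] s0 a y0 z_in.
have [dot_ge _] := normal_dot_bounds r_in z_in.
have rL_gt0 : 0 < r * Lam r / 2 by rewrite divr_gt0 ?mulr_gt0 ?Lam_gt0.
have k_gt0 : 0 < (normal_scale phi (s *: xprime x))^-1.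
  by rewrite invr_gt0 (lt_le_trans ltr01 (normal_scale_ge1 _ _)).
move: (lt_le_trans rL_gt0 dot_ge); rewrite -/a -/y0 addrC addKr dotvZl pmulr_rgt0 //.
rewrite dotv_xsplit xprime_normal_graph xlast_normal_graph xprime_segment_e_last.
rewrite xprimeB xlastB /y0 xprimeZ xlastZ xprime_e_last xlast_e_last scaler0 subr0.
rewrite mulr1 opprK dotvZr.
move: (normal_scale phi _)^-1 k_gt0 => k k_gt0.
rewrite (dotvC (xprime x)) => pos; rewrite -subr_gt0 -(pmulr_rgt0 _ k_gt0).
by move: pos; congr (0 < _); ring.
Qed.

Lemma segment_below_graph r x : 0 < r <= R0 ->
  let a := 4 * Lam r * r in let y0 := - a *: e_last R n in
  enorm (x - y0) < r - a -> xlast x < phi (xprime x) ->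
  forall t, 0 <= t <= 1 ->
    xlast (y0 + t *: (x - y0)) < phi (xprime (y0 + t *: (x - y0))).
Proof.
move=> /[dup] r_in /andP[r0 rR] a y0 x_near x_below.
have z_lt w : 0 <= w <= 1 -> enorm (y0 + w *: (x - y0)) < r.
  by move=> w01; apply: enorm_lt_of_shifted_ball => //; rewrite enorm_segment_lt.
set v := xprime x; set c := xlast x + a.
have v_le : enorm v <= R0.
  apply: ltW; apply: le_lt_trans (enorm_xprime_le _) (lt_le_trans _ rR).
  by have := z_lt 1; rewrite scale1r addrC subrK ler01 lexx; apply.
pose g (w : R) := phi (w *: v) - (w * c - a).
have g_derive (w : R) : 0 <= w <= 1 -> is_derive w 1 g (dotv (grad phi (w *: v)) v - c).
  by move=> w01; exact: is_derive_ray_subr_line (differentiable_ray v_le w01).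
have g_cont (w : R) : 0 <= w <= 1 -> {for w, continuous (fun w => - g w)}.
  by move=> /g_derive [] /derivable1_diffP /differentiable_continuous /continuousN.
(* at the largest zero s of g the segment would touch the graph from below *)
have g_pos : forall w, 0 <= w <= 1 -> 0 < g w.
  apply: real_induction_down01 => [s /andP[s0 s1] g_right|s /andP[s0 s1] g_right].
    have [->|s_neq1] := eqVneq s 1; first by rewrite /g scale1r mul1r /c addrK subr_gt0.
    have [->|s_neq0] := eqVneq s 0.
      by rewrite /g scale0r phi0 mul0r !sub0r opprK !mulr_gt0 ?Lam_gt0.
    have s01 : 0 <= s <= 1 by rewrite s0.
    have s_lt1 : s < 1 by rewrite lt_neqAle s_neq1.
    have g_ge0 : 0 <= g s.
      rewrite -oppr_le0; apply: (continuous_le_at_right (g_cont s s01) s_lt1).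
      by move=> u /g_right /ltW; rewrite oppr_le0.
    rewrite lt_neqAle g_ge0 andbT eq_sym; apply/eqP => gs0.
    have zs_in : graph_ball r (y0 + s *: (x - y0)).
      split; first exact: z_lt.
      rewrite xprime_segment_e_last xlast_segment_e_last; apply/eqP.
      by rewrite eq_sym -subr_eq0 -/(g s) gs0.
    have s_gt0 : 0 < s by rewrite lt_neqAle eq_sym s_neq0.
    have [g_derivable g_val] := g_derive s s01.
    suff : 0 <= 'D_1 g s by rewrite g_val subr_ge0 leNgt grad_dot_lt_at_crossing.
    apply: derive_ge0_at_right_min g_derivable (_ : 0 < 1 - s) _; first by rewrite subr_gt0.
    move=> t /andP[st]; rewrite addrC subrK => t1.
    by rewrite gs0; apply/ltW/g_right; rewrite st ltW.
  have s01 : 0 <= s <= 1 by rewrite ltW.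
  have gs_lt : - g s < 0 by rewrite oppr_lt0 g_right ?lexx.
  have [d d0 g_near] := continuous_lt_near_left (g_cont s s01) gs_lt.
  by exists d => // u _ /g_near; rewrite oppr_lt0.
by move=> t t01; rewrite xprime_segment_e_last xlast_segment_e_last -subr_gt0; exact: g_pos.
Qed.

End GraphBall.

Section BoundaryGraph.
Variables (R : realType) (n : nat) (Om : set 'rV[R]_n.+1) (phi : 'rV[R]_n -> R).
Variables (R0 : R) (Lam : R -> R).
Hypothesis bdry_graph :
  forall x, eball 0 R0 x -> (bdry Om x <-> xlast x = phi (xprime x)).

Lemma bdry_graph_ball rho x : rho <= R0 -> graph_ball phi rho x -> bdry Om x.
Proof.
move=> rho_le [x_lt x_graph].
have x_R0 : eball 0 R0 x by rewrite eball0 (lt_le_trans x_lt).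
exact: (bdry_graph x_R0).2 x_graph.
Qed.

Lemma normal_osc_graph_ball :
  (forall r, 0 < r <= R0 -> forall x1 x2,
      bdry Om x1 -> eball 0 r x1 -> bdry Om x2 -> eball 0 r x2 ->
      enorm (normal_graph phi x2 - normal_graph phi x1) <= Lam r) ->
  forall r, 0 < r <= R0 -> forall x1 x2, graph_ball phi r x1 -> graph_ball phi r x2 ->
    enorm (normal_graph phi x2 - normal_graph phi x1) <= Lam r.
Proof.
move=> normal_osc r /[dup] r_in /andP[_ rR] x1 x2 x1_in x2_in.
apply: normal_osc; rewrite ?eball0 //; try exact: bdry_graph_ball rR _.
- by case: x1_in.
- by case: x2_in.
Qed.

End BoundaryGraph.

Theorem lemma3p2 (R : realType) (n : nat) (Om : set 'rV[R]_n.+1)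
  (phi : 'rV[R]_n -> R) (R0 : R) (Lam : R -> R) :
  C1Dini_domain Om ->
  bdry Om 0 ->
  0 < R0 -> R0 < 1 ->
  C1Dini_on phi R0 ->
  (forall x, eball 0 R0 x -> (Om x <-> xlast x < phi (xprime x))) ->
  (forall x, eball 0 R0 x -> (bdry Om x <-> xlast x = phi (xprime x))) ->
  phi 0 = 0 ->
  grad phi 0 = 0 ->
  (forall x', enorm x' <= R0 -> Num.sqrt (1 + enorm (grad phi x') ^+ 2) <= 3 / 2) ->
  (forall r, 0 < r <= R0 -> 0 < Lam r) ->
  (forall r s, 0 < r -> r <= s -> s <= R0 -> Lam r <= Lam s) ->
  (forall r, 0 < r <= R0 -> forall x1 x2,
      bdry Om x1 -> eball 0 r x1 -> bdry Om x2 -> eball 0 r x2 ->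
      enorm (normal_graph phi x2 - normal_graph phi x1) <= Lam r) ->
  Lam R0 < 1 / 1000 ->
  forall r, 0 < r <= R0 ->
    let a := 4 * Lam r * r in
    let y0 := - a *: e_last R n in
    star_shaped (Om `&` eball y0 (r - a)) y0 /\
    (forall x, bdry Om x -> eball 0 r x ->
       r * Lam r / 2 <= dotv (x - y0) (normal_graph phi x) /\
       dotv (x - y0) (normal_graph phi x) <= 10 * r * Lam r).
Proof.
(* only differentiability of phi is used: the Dini modulus enters through Lam *)
move=> _ _ R0_gt0 _ [phi_diff _] Om_below bdry_graph phi0 grad_phi0 scale_le Lam_gt0
  Lam_mono normal_osc Lam_R0 r /[dup] r_in /andP[r0 rR] a y0.
have Lam_small rho : 0 < rho <= R0 -> Lam rho < 1 / 1000.
  by move=> /andP[rho0 rho_le]; apply: le_lt_trans Lam_R0; exact: Lam_mono.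
have graph_osc := normal_osc_graph_ball bdry_graph normal_osc.
have in_R0 (x : 'rV[R]_n.+1) : enorm x < r -> eball 0 R0 x.
  by rewrite eball0 => /lt_le_trans; apply.
split.
  move=> x [Om_x x_near] t t01; split; last exact: enorm_segment_lt.
  have z_lt := enorm_lt_of_shifted_ball Lam_gt0 r_in (enorm_segment_lt x_near t01).
  apply/Om_below; first exact: in_R0 _ z_lt.
  apply: (segment_below_graph (R0 := R0)) => //.
  by apply/Om_below => //; exact: in_R0 _ (enorm_lt_of_shifted_ball Lam_gt0 r_in x_near).
move=> x x_bdry; rewrite eball0 => x_lt.
apply: (normal_dot_bounds (R0 := R0)) => //; split=> //.
exact: (bdry_graph x (in_R0 _ x_lt)).1 x_bdry.
Qed.
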